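(* Let $K\ge1$, $N=2^K-1$ and $\mu>0$. For the $(N,K)$ binary simplex coded system with node service rate $\mu$, the maximum of $\lambda_1+\dots+\lambda_K$ over all vectors $(\lambda_1,\dots,\lambda_K)$ in its service capacity region equals $2^{K-1}\mu$.
   Context: Binary simplex coded system: $K$ files $f_1,\dots,f_K$ of equal size (elements of a vector space over a field of characteristic $2$) are stored on $N=2^K-1$ nodes indexed by the nonzero vectors $v\in\mathbb{F}_2^K$, node $v$ storing $\sum_{j=1}^K v_jf_j$. Each node has service rate $\mu$. Let $e_i$ be the $i$-th standard basis vector. The recovering sets of file $f_i$ are the systematic node $\{e_i\}$ and the $2^{K-1}-1$ disjoint repair groups $\{v,v+e_i\}$, $v\in\mathbb{F}_2^K\setminus\{0,e_i\}$ (each unordered pair counted once). Requests for $f_i$ arrive at rate $\lambda_i\ge0$. The service capacity region is the set of vectors $(\lambda_1,\dots,\lambda_K)$ for which there exist nonnegative rates assigned to the recovering sets of each $f_i$, summing to $\lambda_i$ for every $i$, such that for every node the total rate assigned to recovering sets containing that node is at most $\mu$. *)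

From mathcomp Require Import all_boot all_order all_algebra.
Set Implicit Arguments. Unset Strict Implicit. Unset Printing Implicit Defensive.
Import Order.TTheory GRing.Theory Num.Theory.
Local Open Scope ring_scope.

(* Vectors of F_2^K, represented as boolean functions on 'I_K. *)
Definition vec (K : nat) := {ffun 'I_K -> bool}.

Definition zerov (K : nat) : vec K := [ffun _ => false].
Definition addv (K : nat) (u v : vec K) : vec K := [ffun j => u j (+) v j].
Definition ev (K : nat) (i : 'I_K) : vec K := [ffun j => j == i].

(* Recovering sets of file f_i: the systematic node {e_i} and the
   repair groups {v, v + e_i}, v notin {0, e_i} (unordered, counted once
   since they are sets of sets). Nodes are the nonzero vectors. *)
Definition rec_sets (K : nat) (i : 'I_K) : {set {set vec K}} :=
  [set [set ev i]] :|:
  [set [set v; addv v (ev i)] | v in [set v : vec K | (v != zerov K) && (v != ev i)]].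

Definition in_capacity_region (R : realFieldType) (K : nat) (mu : R)
    (lam : 'I_K -> R) : Prop :=
  (forall i, 0 <= lam i) /\
  exists r : 'I_K -> {set vec K} -> R,
    (forall i S, 0 <= r i S) /\
    (forall i, \sum_(S in rec_sets i) r i S = lam i) /\
    (forall u : vec K, u != zerov K ->
       \sum_(i < K) \sum_(S in rec_sets i | u \in S) r i S <= mu).

(* Call a vector odd when it has odd Hamming weight. A repair group {v, v + e_i}
   contains exactly one odd vector, and so does the systematic node {e_i}; hence
   the total request rate equals the sum of the loads of the 2^(K-1) odd nodes,
   each at most mu. Conversely, serving a single file through all its recovering
   sets at rate mu loads every node exactly mu, since these sets partition the
   nodes. *)

From Pilot Require Import Defs.
From mathcomp Require Import all_boot all_order all_algebra.
Import Order.TTheory GRing.Theory Num.Theory.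
Local Open Scope ring_scope.
Local Notation addv := Defs.addv.
Set Implicit Arguments. Unset Strict Implicit.

Definition parity K (v : vec K) : bool := \big[addb/false]_(j < K) v j.

Lemma parity_addv K (v w : vec K) : parity (addv v w) = parity v (+) parity w.
Proof. by rewrite /parity -big_split; apply: eq_bigr => j _; rewrite ffunE. Qed.

Lemma parity_ev K (i : 'I_K) : parity (ev i).
Proof.
rewrite /parity (bigD1 i) //= ffunE eqxx big1 // => j /negbTE.
by rewrite ffunE => ->.
Qed.

Lemma parity_zerov K : parity (zerov K) = false.
Proof. by rewrite /parity big1 // => j _; rewrite ffunE. Qed.

Lemma odd_neq0 K (u : vec K) : parity u -> u != zerov K.
Proof. by apply: contraTneq => ->; rewrite parity_zerov. Qed.

Lemma addvK K (e : vec K) : involutive (fun v : vec K => addv v e).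
Proof. by move=> v; apply/ffunP => j; rewrite !ffunE addbK. Qed.

Lemma addv_eq0 K (v e : vec K) : (addv v e == zerov K) = (v == e).
Proof.
apply/eqP/eqP => [ve0 | ->]; last by apply/ffunP => j; rewrite !ffunE addbb.
by rewrite -[v](addvK e) ve0; apply/ffunP => j; rewrite !ffunE.
Qed.

Lemma card_odd_vec K (i : 'I_K) : #|[set u : vec K | parity u]| = (2 ^ K.-1)%N.
Proof.
set A := [set u : vec K | parity u].
have flipA : (fun u => addv u (ev i)) @^-1: A = ~: A.
  by apply/setP => u; rewrite !inE parity_addv parity_ev addbT.
have := cardsC A; rewrite -flipA card_preimset; last exact: inv_inj (addvK _).
rewrite card_ffun card_bool card_ord addnn -mul2n.
case: K i A {flipA} => [[] //|k _ A]; rewrite expnS => /eqP.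
by rewrite eqn_pmul2l // => /eqP.
Qed.

Lemma sum_odd_vec_const (R : nmodType) K (i : 'I_K) (c : R) :
  \sum_(u : vec K | parity u) c = c *+ 2 ^ K.-1.
Proof.
by rewrite -(card_odd_vec i) -sumr_const; apply: eq_bigl => u; rewrite inE.
Qed.

Lemma rec_set_unique_odd K (i : 'I_K) S : S \in rec_sets i ->
  exists w, forall u, parity u && (u \in S) = (u == w).
Proof.
rewrite in_setU in_set1 => /orP[/eqP-> | /imsetP[v _ ->]].
  exists (ev i) => u; rewrite in_set1.
  by case: eqVneq => [->|]; rewrite ?parity_ev ?andbF.
have odd_sum : parity (addv v (ev i)) = ~~ parity v.
  by rewrite parity_addv parity_ev addbT.
exists (if parity v then v else addv v (ev i)) => u; rewrite in_set2.
have vNw : v != addv v (ev i).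
  by apply/eqP => vw; move: odd_sum; rewrite -vw; case: parity.
case: eqVneq => [-> | uNv].
  by case: ifP => _; rewrite ?eqxx ?(negbTE vNw).
case: eqVneq => [-> | uNw]; case: ifP => vodd.
- by rewrite odd_sum vodd eq_sym (negbTE vNw).
- by rewrite odd_sum vodd eqxx.
- by rewrite andbF (negbTE uNv).
- by rewrite andbF (negbTE uNw).
Qed.

Lemma rec_sets_partition_nodes K (i : 'I_K) (u : vec K) : u != zerov K ->
  exists Su, forall S, (S \in rec_sets i) && (u \in S) = (S == Su).
Proof.
move=> u0.
exists (if u == ev i then [set ev i] else [set u; addv u (ev i)]) => S.
apply/idP/eqP => [|->].
  case/andP; rewrite in_setU in_set1 => /orP[/eqP-> | /imsetP[v Hv ->]].
    by rewrite in_set1 => /eqP->; rewrite eqxx.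
  move: Hv; rewrite inE => /andP[v0 vNe].
  have wNe : addv v (ev i) != ev i.
    by apply: contra_neq v0 => we; apply/eqP; rewrite -[v](addvK (ev i)) we addv_eq0.
  rewrite in_set2 => /orP[/eqP-> | /eqP->]; first by rewrite (negbTE vNe).
  by rewrite (negbTE wNe) addvK setUC.
case: eqVneq => [-> | uNe]; first by rewrite in_setU !in_set1 !eqxx.
rewrite in_set2 eqxx andbT in_setU; apply/orP; right.
by apply/imsetP; exists u => //; rewrite inE u0.
Qed.

Section Loads.

Variables (R : realFieldType) (K : nat).
Implicit Types (r : 'I_K -> {set vec K} -> R) (u : vec K).

Definition load r u : R := \sum_(i < K) \sum_(S in rec_sets i | u \in S) r i S.

Lemma sum_rates_odd_loads r :
  \sum_(i < K) \sum_(S in rec_sets i) r i S = \sum_(u | parity u) load r u.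
Proof.
rewrite /load exchange_big /=; apply: eq_bigr => i _.
transitivity (\sum_(S in rec_sets i) \sum_(u | parity u && (u \in S)) r i S).
  by apply: eq_bigr => S /rec_set_unique_odd[w oddS]; rewrite (big_pred1 w).
rewrite (exchange_big_dep (fun u => parity u)) /=; last by move=> S u _ /andP[].
by apply: eq_bigr => u oddu; apply: eq_bigl => S; rewrite oddu.
Qed.

Definition single_file_rates (i0 : 'I_K) (c : R) : 'I_K -> {set vec K} -> R :=
  fun i _ => if i == i0 then c else 0.

Lemma single_file_rates_ge0 (i0 : 'I_K) (c : R) i S :
  0 <= c -> 0 <= single_file_rates i0 c i S.
Proof. by rewrite /single_file_rates; case: ifP. Qed.

Lemma load_single_file (i0 : 'I_K) (c : R) u : u != zerov K ->
  load (single_file_rates i0 c) u = c.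
Proof.
move=> u0; rewrite /load /single_file_rates (bigD1 i0) //=.
rewrite [X in _ + X]big1 ?addr0 => [|i /negbTE iNi0].
  by have [Su uSu] := rec_sets_partition_nodes i0 u0; rewrite (big_pred1 Su) // eqxx.
by rewrite big1 // => S _; rewrite iNi0.
Qed.

End Loads.

Theorem lemma3 (R : realFieldType) (K : nat) (mu : R) :
  (1 <= K)%N -> 0 < mu ->
  (exists lam : 'I_K -> R, in_capacity_region mu lam /\
     \sum_(i < K) lam i = 2%:R ^+ K.-1 * mu) /\
  (forall lam : 'I_K -> R, in_capacity_region mu lam ->
     \sum_(i < K) lam i <= 2%:R ^+ K.-1 * mu).
Proof.
move=> K_gt0 mu_gt0; pose i0 : 'I_K := Ordinal K_gt0.
have total_odd (c : R) : \sum_(u : vec K | parity u) c = 2%:R ^+ K.-1 * c.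
  by rewrite (sum_odd_vec_const i0) -natrX mulr_natl.
split.
  pose r := single_file_rates i0 mu.
  have r_ge0 i S : 0 <= r i S by apply/single_file_rates_ge0/ltW.
  exists (fun i => \sum_(S in rec_sets i) r i S); split.
    split=> [i|]; first exact: sumr_ge0.
    by exists r; split=> //; split=> // u u0; rewrite -/(load r u) load_single_file.
  rewrite sum_rates_odd_loads -total_odd.
  by apply: eq_bigr => u /odd_neq0; apply: load_single_file.
move=> lam [_ [r [_ [lamE load_le]]]].
under eq_bigr do rewrite -lamE.
rewrite sum_rates_odd_loads -total_odd.
by apply: ler_sum => u /odd_neq0; apply: load_le.
Qed.
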